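(* Let $q\equiv 3 \pmod 4$ be a prime power. In $G=\mathbb{Z}_2\times(\mathbb{F}_{q^2},+)$ define $B_0=(\{0\}\times D_0)\cup(\{1\}\times(\mathbb{F}_{q^2}\setminus D_0))$ and $B_1=(\{0\}\times D_2)\cup(\{1\}\times D_2)$. Then $|B_0|=q^2$, $|B_1|=q^2-1$, and in the group ring $\mathbb{Z}[G]$, $$\sum_{i=0,1}B_iB_i^{(-1)}=\{0\}\times\Big((q^2-2)\,\mathbb{F}_{q^2}^\ast+(2q^2-1)\cdot 0_{\mathbb{F}_{q^2}}\Big)+\{1\}\times\Big(2D_0-2D_2+(q^2-1)\,\mathbb{F}_{q^2}\Big).$$
   Context: Let $\omega$ be a primitive element of $\mathbb{F}_{q^2}$. For a positive divisor $N$ of $q^2-1$, the $N$-th cyclotomic classes are $C_i^{(N,q^2)}=\omega^i\langle\omega^N\rangle$ (index $i$ taken mod $N$). Set $D_i=C_i^{(4,q^2)}\cup C_{i+1}^{(4,q^2)}$ for $i=0,1,2,3$. For an additive abelian group $G$, a subset $X\subseteq G$ is identified with the group ring element $\sum_{x\in X}x\in\mathbb{Z}[G]$; $X^{(-1)}=\{-x:x\in X\}$; $G^\ast=G\setminus\{0_G\}$. For $X\in\mathbb{Z}[\mathbb{F}_{q^2}]$ and $\epsilon\in\mathbb{Z}_2$, $\{\epsilon\}\times X$ denotes the element of $\mathbb{Z}[\mathbb{Z}_2\times\mathbb{F}_{q^2}]$ obtained by replacing each $x$ with $(\epsilon,x)$ (coefficients kept), and $c\cdot 0_{\mathbb{F}_{q^2}}$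 denotes $c$ times the identity element. *)

From HB Require Import structures.
From mathcomp Require Import all_boot all_order all_algebra all_field.
Set Implicit Arguments. Unset Strict Implicit. Unset Printing Implicit Defensive.
Import GRing.Theory Num.Theory.
Local Open Scope ring_scope.

(* Elements of the group ring Z[G] of a finite additive group G, represented
   as their coefficient functions G -> int. *)
Definition grring (G : finZmodType) := G -> int.

(* a subset X, identified with sum_{x in X} x *)
Definition grset (G : finZmodType) (X : {set G}) : grring G :=
  fun g => ((g \in X) : nat)%:Z.

Definition grzero (G : finZmodType) : grring G := fun g => ((g == 0) : nat)%:Z.

Definition gradd (G : finZmodType) (a b : grring G) : grring G := fun g => a g + b g.
Definition grscale (G : finZmodType) (c : int) (a : grring G) : grring G :=
  fun g => c * a g.
Definition grmul (G : finZmodType) (a b : grring G) : grring G :=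
  fun g => \sum_(h : G) a h * b (g - h).
Definition grinv (G : finZmodType) (a : grring G) : grring G := fun g => a (- g).

Definition G2 (F : finFieldType) := ('Z_2 * F)%type.
HB.instance Definition _ F := GRing.Zmodule.on (G2 F).
HB.instance Definition _ F := Finite.on (G2 F).

(* {eps} x X, for X in Z[F], as an element of Z[Z_2 x F] *)
Definition grembed (F : finFieldType) (eps : 'Z_2) (a : grring F)
  : grring (G2 F) :=
  fun p => if p.1 == eps then a p.2 else 0.

(* N-th cyclotomic class C_i^{(N)} = w^i <w^N> in a finite field F, for w primitive *)
Definition cyclass (F : finFieldType) (w : F) (N i : nat) : {set F} :=
  [set x | [exists k : 'I_#|F|, x == w ^+ (N * k + i)]].

Definition Dcl (F : finFieldType) (w : F) (i : nat) : {set F} :=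
  cyclass w 4 (i %% 4) :|: cyclass w 4 (i.+1 %% 4).

Definition B0 (F : finFieldType) (w : F) : {set G2 F} :=
  setX [set 0] (Dcl w 0) :|: setX [set 1] (~: Dcl w 0).
Definition B1 (F : finFieldType) (w : F) : {set G2 F} :=
  setX [set 0] (Dcl w 2) :|: setX [set 1] (Dcl w 2).

(* Let s and z be the indicators of D_0 and of {0}.  On each layer the
   indicators of B_0 and B_1 are s, 1 - s and 1 - s - z (D_2 is the complement
   of {0} u D_0), so each layer of the identity is a sum over x of a quadratic
   expression in s(x), s(x - y), z(x), z(x - y).  All these sums are explicit
   (|D_0| = (q^2 - 1)/2 and D_0 = -D_0) except the autocorrelation of D_0,
       sum_x s(x) s(x - g) = (q^2 - 1)/4 - s(g)      for g <> 0,
   which is the heart of the proof.  Substituting x = g t, we split t along the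
   subfield K = GF(q).  For t in K the summand is s(g), except at t = 0, 1,
   because D_0 is a union of cosets of K^# (4 divides q + 1).  For t outside K,
   t |-> (coset of t, coset of t - 1) is a bijection onto the ordered pairs of
   distinct nontrivial elements of the cyclic group F^#/K^# of order q + 1, and
   the sum becomes (sum of a 0/1 sequence)^2 - (its sum). *)

From HB Require Import structures.
From mathcomp Require Import all_boot all_order all_algebra all_field.
From mathcomp Require Import zify ring.
Import GRing.Theory.
Set Implicit Arguments. Unset Strict Implicit. Unset Printing Implicit Defensive.
Local Open Scope ring_scope.

Lemma sum_distinct_pairs (T : finType) (R : comRingType) (P : pred T)
    (f : T -> R) :
  \sum_(ab : T * T | [&& P ab.1, P ab.2 & ab.1 != ab.2]) f ab.1 * f ab.2 =
  (\sum_(a | P a) f a) ^+ 2 - \sum_(a | P a) f a ^+ 2.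
Proof.
rewrite -(pair_big_dep P (fun a b => P b && (a != b)) (fun a b => f a * f b)).
rewrite expr2 mulr_suml -sumrB; apply: eq_bigr => a Pa.
rewrite mulr_sumr [in RHS](bigD1 a) //= -expr2 addrAC subrr add0r.
by apply: eq_bigl => b; rewrite eq_sym.
Qed.

Lemma sum_periodic (R : nmodType) (d M : nat) (f : nat -> R) :
  \sum_(0 <= j < d * M) f (j %% d)%N = (\sum_(0 <= j < d) f j) *+ M.
Proof.
elim: M => [|M IH]; first by rewrite muln0 big_geq.
rewrite mulnS addnC (big_cat_nat _ (leq_addr _ _)) //= IH mulrSr; congr (_ + _).
rewrite -{1}(add0n (d * M)%N) big_addn addKn.
by apply: eq_big_nat => j /andP [_ hj]; rewrite addnC mulnC modnMDl modn_small.
Qed.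

Lemma card_sum_indicator (T : finType) (A : {pred T}) :
  (#|A| : int) = \sum_(x : T) ((x \in A) : nat)%:Z.
Proof.
rewrite -sum1_card -natz natr_sum big_mkcond /=.
by apply: eq_bigr => x _; case: (x \in A).
Qed.

Lemma sum_G2 (F : finFieldType) (f : G2 F -> int) :
  \sum_(h : G2 F) f h = \sum_(x : F) f (0, x) + \sum_(x : F) f (1, x).
Proof.
transitivity (\sum_(e : 'Z_2) \sum_(x : F) f (e, x)).
  by rewrite pair_bigA; apply: eq_bigr => -[].
rewrite big_ord_recl big_ord1.
by congr (_ + _); apply: eq_bigr => x _; congr (f (_, _)); apply: val_inj.
Qed.

Lemma grmul_grinv_at (F : finFieldType) (a b : grring (G2 F)) (e : 'Z_2) (y : F) :
  grmul a (grinv b) (e, y) =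
  \sum_(x : F) a (0, x) * b (0 - e, x - y) + \sum_(x : F) a (1, x) * b (1 - e, x - y).
Proof.
rewrite /grmul /grinv sum_G2.
by congr (_ + _); apply: eq_bigr => x _; rewrite opprB.
Qed.

Section DiscreteLog.

Variables (F : finFieldType) (w : F).
Local Notation N := #|F|.-1.
Hypothesis w_prim : N.-primitive_root w.

Lemma N_gt0 : (0 < N)%N.
Proof. by rewrite -subn1 subn_gt0 card_finNzRing_gt1. Qed.

Lemma w_neq0 : w != 0.
Proof.
apply/eqP => w0; have := prim_expr_order w_prim.
by rewrite w0 expr0n eqn0Ngt N_gt0 /= => /eqP; rewrite eq_sym oner_eq0.
Qed.

Lemma expr_card_pred {x : F} : x != 0 -> x ^+ N = 1.
Proof.
move=> x0; apply: (mulfI x0).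
by rewrite mulr1 -exprS prednK ?expf_card // ltnW ?card_finNzRing_gt1.
Qed.

(* The discrete logarithm log_w x in [0, N) (0 for x = 0). *)
Definition dlog (x : F) : nat :=
  if [pick i : 'I_N | w ^+ i == x] is Some i then val i else 0.

Lemma dlogP {x : F} : x != 0 -> w ^+ dlog x = x /\ (dlog x < N)%N.
Proof.
move=> x0; rewrite /dlog; case: pickP => [i /eqP -> | none].
  by split=> //; apply: ltn_ord.
have [i wi] := prim_rootP w_prim (expr_card_pred x0).
by have := none i; rewrite wi eqxx.
Qed.

Lemma dlog_exp (j : nat) : (j < N)%N -> dlog (w ^+ j) = j.
Proof.
move=> jN; have [/eqP wj lt_jN] := dlogP (expf_neq0 j w_neq0).
by move: wj; rewrite (eq_prim_root_expr w_prim) !modn_small // => /eqP.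
Qed.

Lemma dlogM (x y : F) : x != 0 -> y != 0 -> dlog (x * y) = ((dlog x + dlog y) %% N)%N.
Proof.
move=> x0 y0; have [wx _] := dlogP x0; have [wy _] := dlogP y0.
by rewrite -{1}wx -{1}wy -exprD -(prim_expr_mod w_prim) dlog_exp // ltn_mod N_gt0.
Qed.

Lemma sum_over_powers (f : F -> int) :
  \sum_(x : F) f x = f 0 + \sum_(j < N) f (w ^+ j).
Proof.
rewrite (bigD1 0) //=; congr (_ + _).
have w_inj : injective (fun j : 'I_N => w ^+ j).
  by move=> i j /eqP; rewrite (eq_prim_root_expr w_prim) !modn_small // => /eqP /val_inj.
rewrite [RHS](eq_bigl (fun j => j \in [set: 'I_N])) => [|j]; last by rewrite inE.
rewrite -(big_imset _ (in2W w_inj)) /=; apply: eq_bigl => x.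
apply/idP/imsetP => [x0 | [j _ ->]]; last by rewrite expf_neq0 ?w_neq0.
by have [wx xN] := dlogP x0; exists (Ordinal xN); rewrite ?inE.
Qed.

Lemma mem_cyclass (d i : nat) (x : F) : (d %| N)%N -> (i < d)%N ->
  (x \in cyclass w d i) = (x != 0) && (dlog x %% d == i)%N.
Proof.
move=> dN id; rewrite inE.
have [-> | x0] /= := eqVneq x 0.
  by apply/existsP => -[k /eqP /esym /eqP]; rewrite expf_eq0 (negbTE w_neq0) andbF.
have [wx xN] := dlogP x0.
apply/existsP/eqP => [[k /eqP] | xd].
  rewrite -{1}wx => /eqP; rewrite (eq_prim_root_expr w_prim) => /eqP e.
  by rewrite -(modn_dvdm _ dN) e (modn_dvdm _ dN) mulnC modnMDl modn_small.
have kF : (dlog x %/ d < #|F|)%N.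
  by rewrite (leq_ltn_trans (leq_div _ _)) // (leq_trans xN) // leq_pred.
by exists (Ordinal kF); rewrite -{1}wx /= {1}(divn_eq (dlog x) d) xd mulnC.
Qed.

Hypothesis four_dvd_N : (4 %| N)%N.

Lemma mem_D0 (x : F) : (x \in Dcl w 0) = (x != 0) && (dlog x %% 4 < 2)%N.
Proof.
rewrite inE !mem_cyclass //; case: (x != 0) => //=.
by have := ltn_pmod (dlog x) (isT : (0 < 4)%N); lia.
Qed.

Lemma mem_D2 (x : F) : (x \in Dcl w 2) = (x != 0) && (2 <= dlog x %% 4)%N.
Proof.
rewrite inE !mem_cyclass //; case: (x != 0) => //=.
by have := ltn_pmod (dlog x) (isT : (0 < 4)%N); lia.
Qed.

Lemma grset_D2 (x : F) : grset (Dcl w 2) x = 1 - grset (Dcl w 0) x - grzero x.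
Proof.
rewrite /grset /grzero mem_D2 mem_D0; have [-> // | x0] := eqVneq x 0.
by case: (ltnP (dlog x %% 4) 2).
Qed.

Lemma sum_D0 : \sum_(x : F) grset (Dcl w 0) x = (N %/ 2)%N%:Z.
Proof.
rewrite sum_over_powers /grset mem_D0 eqxx add0r.
rewrite (eq_bigr (fun j : 'I_N => ((j %% 4 < 2)%N : nat)%:Z)); last first.
  by move=> j _; rewrite mem_D0 expf_neq0 ?w_neq0 // dlog_exp.
rewrite -(big_mkord xpredT (fun j => ((j %% 4 < 2)%N : nat)%:Z)).
have N4 : N = (4 * (N %/ 4))%N by rewrite mulnC divnK.
rewrite [in X in \sum_(0 <= _ < X) _]N4.
rewrite (sum_periodic 4 _ (fun j => ((j < 2)%N : nat)%:Z)).
rewrite !big_nat_recr //= big_geq // !addr0 add0r -mulr_natr natz.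
by move: N4; set M := N; lia.
Qed.

Lemma w_half : w ^+ (N %/ 2) = -1.
Proof.
have N2 : N = (N %/ 2 * 2)%N by rewrite divnK // (dvdn_trans _ four_dvd_N).
have : (w ^+ (N %/ 2)) ^+ 2 = 1 by rewrite -exprM -N2 prim_expr_order.
move/eqP; rewrite -subr_eq0 subr_sqr_1 mulf_eq0 subr_eq0 addr_eq0 => /orP [/eqP w1 | /eqP //].
have half_gt0 : (0 < N %/ 2)%N by move: N2 N_gt0; set M := N; lia.
have : (N %| N %/ 2)%N by rewrite (prim_order_dvd w_prim) w1.
by move/(dvdn_leq half_gt0); move: N2 half_gt0; set M := N; lia.
Qed.

(* When 8 divides N, -1 is a fourth power, so D_0 is symmetric. *)
Lemma D0_opp (x : F) : (8 %| N)%N -> (- x \in Dcl w 0) = (x \in Dcl w 0).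
Proof.
move=> eight_dvd; rewrite !mem_D0 oppr_eq0; have [-> // | x0 /=] := eqVneq x 0.
rewrite -mulN1r -w_half dlogM ?expf_neq0 ?w_neq0 // dlog_exp; last first.
  by rewrite ltn_Pdiv // N_gt0.
rewrite (modn_dvdm _ four_dvd_N) -modnDml.
suff -> : (N %/ 2 %% 4 = 0)%N by [].
by apply/eqP; rewrite -/(dvdn 4 _) dvdn_divRL // (dvdn_trans _ eight_dvd).
Qed.

End DiscreteLog.

Section QuadraticExtension.
(* F = GF(q^2) with q = p^k = 3 (mod 4); Kq = GF(q) is the fixed field of
   x |-> x^q, and F^*/Kq^* is cyclic of order q + 1, indexed by dlog mod q+1. *)

Variables (F : finFieldType) (w : F) (p k q : nat).
Hypotheses (p_prime : prime p) (q_def : q = (p ^ k)%N) (q_mod4 : (q %% 4 = 3)%N)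
  (card_F : #|F| = (q ^ 2)%N) (w_prim : (#|F|.-1).-primitive_root w).
Local Notation N := #|F|.-1.
Local Notation s := (grset (Dcl w 0)).

Lemma N_factor : N = (q.+1 * (q - 1))%N.
Proof. by rewrite card_F; lia. Qed.

Lemma four_dvd_qS : (4 %| q.+1)%N.
Proof. by apply/dvdnP; exists (q.+1 %/ 4)%N; lia. Qed.

Lemma four_dvd_N : (4 %| N)%N.
Proof. by rewrite N_factor dvdn_mulr // four_dvd_qS. Qed.

Lemma eight_dvd_N : (8 %| N)%N.
Proof.
rewrite N_factor (_ : 8 = 4 * 2)%N //; apply: dvdn_mul; first exact: four_dvd_qS.
by apply/dvdnP; exists ((q - 1) %/ 2)%N; lia.
Qed.

(* x |-> x^q is a ring endomorphism of F, since q is a power of char F. *)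
Lemma char_F : p \in [char F].
Proof. by apply: (card_finPcharP (n := (k * 2)%N)); rewrite // card_F q_def expnM. Qed.

Lemma q_char_nat : [char F].-nat q.
Proof. by rewrite q_def pnatX (pnatE _ p_prime) char_F. Qed.

Definition Kq : {set F} := [set x | x ^+ q == x].

Lemma Kq0 : 0 \in Kq. Proof. by rewrite inE expr0n; case: q q_mod4. Qed.
Lemma Kq1 : 1 \in Kq. Proof. by rewrite inE expr1n. Qed.

Lemma KqN (x : F) : x \in Kq -> - x \in Kq.
Proof. by rewrite !inE exprNn_pchar ?q_char_nat // => /eqP ->. Qed.

Lemma KqD (x y : F) : x \in Kq -> y \in Kq -> x + y \in Kq.
Proof. by rewrite !inE exprDn_pchar ?q_char_nat // => /eqP -> /eqP ->. Qed.

Lemma KqB (x y : F) : x \in Kq -> y \in Kq -> x - y \in Kq.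
Proof. by move=> Kx Ky; rewrite KqD ?KqN. Qed.

Lemma KqM (x y : F) : x \in Kq -> y \in Kq -> x * y \in Kq.
Proof. by rewrite !inE exprMn => /eqP -> /eqP ->. Qed.

Lemma KqV (x : F) : x \in Kq -> x^-1 \in Kq.
Proof. by rewrite !inE exprVn => /eqP ->. Qed.

Lemma Kq_unit (x : F) : x != 0 -> (x \in Kq) = (x ^+ (q - 1) == 1).
Proof.
move=> x0; rewrite inE.
have -> : x ^+ q = x ^+ (q - 1) * x by rewrite -exprSr; congr (_ ^+ _); lia.
by apply/eqP/eqP => [xq | ->]; [apply: (mulIf x0); rewrite mul1r | rewrite mul1r].
Qed.

Lemma Kq_dlog (x : F) : x != 0 -> (x \in Kq) = (q.+1 %| dlog w x)%N.
Proof.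
move=> x0; rewrite Kq_unit //; have [wx _] := dlogP w_prim x0.
rewrite -{1}wx -exprM -(prim_order_dvd w_prim) N_factor.
by rewrite dvdn_pmul2r //; lia.
Qed.

Lemma card_Kq : #|Kq| = q.
Proof.
suff : (#|Kq| : int) = q%:Z by case.
rewrite card_sum_indicator (sum_over_powers w_prim) Kq0.
rewrite (eq_bigr (fun j : 'I_N => ((j %% q.+1 == 0)%N : nat)%:Z)); last first.
  by move=> j _; rewrite Kq_dlog ?expf_neq0 ?(w_neq0 w_prim) // (dlog_exp w_prim).
rewrite -(big_mkord xpredT (fun j => ((j %% q.+1 == 0)%N : nat)%:Z)).
rewrite [in X in \sum_(0 <= _ < X) _]N_factor.
rewrite (sum_periodic q.+1 _ (fun j => ((j == 0)%N : nat)%:Z)).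
rewrite big_ltn // big_nat_cond big1 => [|j /andP [/andP [j_gt0 _] _]]; last first.
  by case: j j_gt0.
by rewrite addr0 -mulr_natr natz; lia.
Qed.

(* The index of the coset x Kq^* in the cyclic group F^*/Kq^* of order q + 1. *)
Definition coset_index (x : F) : 'I_q.+1 := Ordinal (ltn_pmod (dlog w x) (ltn0Sn q)).

Lemma coset_index0 (x : F) : x != 0 -> (coset_index x == ord0) = (x \in Kq).
Proof. by move=> x0; rewrite Kq_dlog // /dvdn. Qed.

Lemma expr_q1_coset (x : F) : x != 0 -> x ^+ (q - 1) = w ^+ (coset_index x * (q - 1)).
Proof.
move=> x0; have [wx _] := dlogP w_prim x0.
rewrite -{1}wx -exprM -(prim_expr_mod w_prim) /= muln_modl ?N_factor //; lia.
Qed.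

Lemma coset_index_eq (x y : F) : x != 0 -> y != 0 ->
  coset_index x = coset_index y -> x / y \in Kq.
Proof.
move=> x0 y0 xy; rewrite Kq_unit ?mulf_neq0 ?invr_eq0 //.
rewrite exprMn exprVn !expr_q1_coset // xy mulfV //.
by rewrite expf_neq0 // (w_neq0 w_prim).
Qed.

(* Multiplying by t shifts the logarithm mod 4 by the coset index of t,
   because 4 divides q + 1. *)
Lemma mem_D0_mul (g t : F) : g != 0 -> t != 0 ->
  (g * t \in Dcl w 0) = ((dlog w g + coset_index t) %% 4 < 2)%N.
Proof.
move=> g0 t0; rewrite (mem_D0 w_prim four_dvd_N) mulf_neq0 //=.
rewrite (dlogM w_prim) // (modn_dvdm _ four_dvd_N) /=.
by rewrite -[in RHS]modnDmr (modn_dvdm _ four_dvd_qS) modnDmr.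
Qed.

Lemma mem_D0_mulK (c x : F) : c \in Kq -> c != 0 -> (c * x \in Dcl w 0) = (x \in Dcl w 0).
Proof.
move=> Kc c0; have [-> | x0] := eqVneq x 0; first by rewrite mulr0.
rewrite mulrC mem_D0_mul //; move: Kc; rewrite -coset_index0 // => /eqP ->.
by rewrite addn0 (mem_D0 w_prim four_dvd_N) x0.
Qed.

Definition offdiag : {set 'I_q.+1 * 'I_q.+1} :=
  [set ab | [&& ab.1 != ord0, ab.2 != ord0 & ab.1 != ab.2]].

Lemma card_offdiag : (#|offdiag| : int) = q%:Z ^+ 2 - q%:Z.
Proof.
have count_nz : \sum_(a : 'I_q.+1 | a != ord0) (1 : int) = q%:Z.
  by rewrite sumr_const cardC1 card_ord natz.
transitivity ((\sum_(a : 'I_q.+1 | a != ord0) (1 : int)) ^+ 2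
                - \sum_(a : 'I_q.+1 | a != ord0) (1 : int) ^+ 2); last first.
  by rewrite count_nz.
rewrite -(sum_distinct_pairs (fun a : 'I_q.+1 => a != ord0) (fun=> 1 : int)).
rewrite -sum1_card -natz natr_sum.
by apply: eq_big => [ab | ab _]; rewrite ?inE ?mulr1.
Qed.

Definition coset_pair (t : F) : ('I_q.+1 * 'I_q.+1)%type := (coset_index t, coset_index (t - 1)).

Lemma notKq (t : F) : t \notin Kq -> [/\ t != 0, t - 1 != 0 & t - 1 \notin Kq].
Proof.
move=> nKt; have nKt1 : t - 1 \notin Kq.
  by apply: contra nKt => Kt1; rewrite -(subrK 1 t) KqD ?Kq1.
split=> //; [move: nKt | move: nKt1]; by apply: contraNneq => ->; exact: Kq0.
Qed.

(* The map is injective: if t' = c t and t' - 1 = d (t - 1) with c, d in Kq,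
   then (c - d) t = 1 - d forces c = d = 1 since t is not in Kq. *)
Lemma coset_pair_inj : {in ~: Kq &, injective coset_pair}.
Proof.
move=> t t'; rewrite !in_setC => nKt /notKq [t'0 t'10 _] e.
have [t0 t10 _] := notKq nKt.
have Kc := coset_index_eq t'0 t0 (congr1 fst (esym e)).
have Kd := coset_index_eq t'10 t10 (congr1 snd (esym e)).
set c := t' / t in Kc; set d := (t' - 1) / (t - 1) in Kd.
have Et : t' = c * t by rewrite divfK.
have Ed : t' - 1 = d * (t - 1) by rewrite divfK.
have key : (c - d) * t = 1 - d.
  have dt : d * t = t' - 1 + d by rewrite Ed mulrBr mulr1 subrK.
  by rewrite mulrBl -Et dt; ring.
have [cd | cd] := eqVneq c d.
  move: key; rewrite cd subrr mul0r => /esym /eqP; rewrite subr_eq0 => /eqP d1.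
  by rewrite Et cd -d1 mul1r.
suff Kt : t \in Kq by rewrite Kt in nKt.
rewrite (_ : t = (1 - d) / (c - d)); last by rewrite -key mulrC mulKf // subr_eq0.
by rewrite KqM ?KqV ?KqB ?Kq1.
Qed.

(* The pair of cosets avoids the trivial coset and the diagonal: if t and t - 1
   were in the same coset, then 1 - t^-1 = (t - 1) / t would lie in Kq, hence t. *)
Lemma coset_pair_offdiag (t : F) : t \notin Kq -> coset_pair t \in offdiag.
Proof.
move=> nKt; have [t0 t10 nKt1] := notKq nKt.
rewrite inE /= !coset_index0 // nKt nKt1 /=; apply: contra nKt => /eqP e.
have := coset_index_eq t10 t0 (esym e); rewrite mulrBl mulfV // mul1r => Kt'.
have -> : t = (1 - (1 - t^-1))^-1 by rewrite opprB addrC subrK invrK.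
by apply: KqV; rewrite KqB ?Kq1.
Qed.

Lemma card_notKq : (#|~: Kq| : int) = q%:Z ^+ 2 - q%:Z.
Proof.
have := cardsC Kq; rewrite card_Kq card_F => partition_F.
by rewrite -[Posz q]natz -natrX natz; lia.
Qed.

Lemma coset_pair_image : coset_pair @: (~: Kq) = offdiag.
Proof.
apply/eqP; rewrite eqEcard; apply/andP; split.
  by apply/subsetP => _ /imsetP [t nKt ->]; rewrite coset_pair_offdiag // -in_setC.
have : (#|offdiag| : int) = #|~: Kq| by rewrite card_offdiag card_notKq.
by rewrite (card_in_imset coset_pair_inj) => -[->].
Qed.

Lemma s_at0 : s 0 = 0.
Proof. by rewrite /grset (mem_D0 w_prim four_dvd_N) eqxx. Qed.

(* Along Kq the product s(g t) s(g (t - 1)) equals s(g), except at t = 0, 1. *)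
Lemma autocorr_Kq (g : F) :
  \sum_(t in Kq) s (g * t) * s (g * (t - 1)) = s g * (q%:Z - 2).
Proof.
have sum_Kq_eq (a : F) : a \in Kq -> \sum_(t in Kq) ((t == a) : nat)%:Z = 1.
  by move=> Ka; rewrite (bigD1 a) //= eqxx big1 ?addr0 // => t /andP [_ /negbTE ->].
rewrite (eq_bigr (fun t => s g * (1 - ((t == 0) : nat)%:Z - ((t == 1) : nat)%:Z))).
  rewrite -mulr_sumr !sumrB sumr_const card_Kq !sum_Kq_eq ?Kq0 ?Kq1 //.
  by rewrite -mulr_natr mul1r natz; congr (_ * _); lia.
move=> t Kt; have [-> | t0] := eqVneq t 0; first by rewrite mulr0 s_at0 mul0r eq_sym oner_eq0 /=; lia.
have [-> | t1] := eqVneq t 1; first by rewrite subrr mulr0 s_at0 mulr0 /=; lia.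
rewrite ![g * _]mulrC /grset !mem_D0_mulK ?KqB ?Kq1 ?subr_eq0 //=.
by case: (g \in Dcl w 0).
Qed.

(* By mem_D0_mul, s(g t) = coset_ind (dlog g) (coset_index t) for g, t <> 0. *)
Definition coset_ind (L : nat) (a : 'I_q.+1) : int := (((L + a) %% 4 < 2)%N : nat)%:Z.

(* Since 4 | q + 1, exactly half of the residues a < q + 1 have (L + a) mod 4 < 2. *)
Lemma sum_coset_ind (L : nat) : \sum_(a : 'I_q.+1) coset_ind L a = (q.+1 %/ 2)%N%:Z.
Proof.
rewrite /coset_ind -(big_mkord xpredT (fun a => (((L + a) %% 4 < 2)%N : nat)%:Z)).
have -> : q.+1 = (4 * (q.+1 %/ 4))%N by rewrite mulnC divnK // four_dvd_qS.
rewrite (eq_big_nat _ _ (F2 := fun j => (((L + j %% 4) %% 4 < 2)%N : nat)%:Z)).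
  rewrite (sum_periodic 4 _ (fun j => (((L + j) %% 4 < 2)%N : nat)%:Z)).
  rewrite !big_nat_recr //= big_geq // add0r -!(modnDml L) addn0.
  rewrite -mulr_natr natz.
  by have := ltn_pmod L (isT : (0 < 4)%N); case: (L %% 4)%N => [|[|[|[|]]]] //= _; lia.
by move=> j _; rewrite modnDmr.
Qed.

Lemma autocorr_notKq (g : F) : g != 0 ->
  \sum_(t | t \notin Kq) s (g * t) * s (g * (t - 1)) =
  ((q.+1 %/ 2)%N%:Z - s g) ^+ 2 - ((q.+1 %/ 2)%N%:Z - s g).
Proof.
move=> g0; set u := coset_ind (dlog w g).
transitivity (\sum_(ab in offdiag) u ab.1 * u ab.2).
  rewrite -coset_pair_image big_imset /=; last exact: coset_pair_inj.
  apply: eq_big => t; first by rewrite in_setC.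
  by move=> /notKq [t0 t10 _]; rewrite /grset !mem_D0_mul.
have u0 : u ord0 = s g by rewrite /u /coset_ind /grset (mem_D0 w_prim four_dvd_N) g0 addn0.
have sum_u : \sum_(a | a != ord0) u a = (q.+1 %/ 2)%N%:Z - s g.
  by rewrite -u0 -(sum_coset_ind (dlog w g)) [in RHS](bigD1 ord0) //= addrC addrK.
have sum_u2 : \sum_(a | a != ord0) u a ^+ 2 = \sum_(a | a != ord0) u a.
  by apply: eq_bigr => a _; rewrite /u /coset_ind; case: (_ < _)%N.
rewrite -sum_u -{2}sum_u2.
rewrite -(sum_distinct_pairs (fun a : 'I_q.+1 => a != ord0)).
by apply: eq_bigl => ab; rewrite inE.
Qed.

(* The periodic autocorrelation of D_0: for g != 0,
   |D_0 n (D_0 + g)| = (q^2 - 1)/4 - [g in D_0].  Substitute x = g t and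
   split t along Kq. *)
Lemma autocorr_D0 (g : F) : g != 0 ->
  \sum_(x : F) s x * s (x - g) = (N %/ 4)%N%:Z - s g.
Proof.
move=> g0; rewrite (reindex_inj (mulfI g0)) /=.
under eq_bigr do rewrite -[X in _ * _ - X]mulr1 -mulrBr.
rewrite (bigID (mem Kq)) /= autocorr_Kq autocorr_notKq //.
have s01 : s g = 0 \/ s g = 1 by rewrite /grset; case: (g \in _); [right | left].
rewrite N_factor; move: four_dvd_qS => /dvdnP [m qS]; rewrite qS.
by case: s01 => ->; nia.
Qed.

Local Notation z := (@grzero F).

Lemma grset_B0_0 (x : F) : grset (B0 w) (0, x) = s x.
Proof. by rewrite /grset /B0 in_setU !in_setX !in_set1 /= orbF. Qed.

Lemma grset_B0_1 (x : F) : grset (B0 w) (1, x) = 1 - s x.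
Proof. by rewrite /grset /B0 in_setU !in_setX !in_set1 /= in_setC; case: (x \in _). Qed.

Lemma grset_B1 (e : 'Z_2) (x : F) : grset (B1 w) (e, x) = 1 - s x - z x.
Proof.
rewrite -(grset_D2 w_prim four_dvd_N) /grset /B1 in_setU !in_setX !in_set1 /=.
by case: e => -[|[|//]] ?; rewrite ?andbF ?orbF.
Qed.

Lemma sum_shift (f : F -> int) (y : F) : \sum_(x : F) f (x - y) = \sum_(x : F) f x.
Proof. by rewrite (reindex_inj (addIr y)) /=; apply: eq_bigr => x _; rewrite addrK. Qed.

Lemma sum_grzero : \sum_(x : F) z x = 1.
Proof. by rewrite /grzero (bigD1 0) //= eqxx big1 ?addr0 // => x /negbTE ->. Qed.

Lemma correlation_expansion (y : F) (c1 c2 c3 c4 c5 c6 c7 c8 c9 : int) :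
  \sum_(x : F) (c1 + c2 * s x + c3 * s (x - y) + c4 * z x + c5 * z (x - y)
     + c6 * (s x * s (x - y)) + c7 * (s x * z (x - y)) + c8 * (z x * s (x - y))
     + c9 * (z x * z (x - y)))
  = c1 * #|F|%:Z + (c2 + c3) * (N %/ 2)%N%:Z + c4 + c5
    + c6 * (\sum_(x : F) s x * s (x - y)) + (c7 + c8) * s y + c9 * z y.
Proof.
have sum_sz : \sum_(x : F) s x * z (x - y) = s y.
  rewrite (bigD1 y) //= /grzero subrr eqxx mulr1 big1 ?addr0 // => x /negbTE xy.
  by rewrite subr_eq0 xy mulr0.
have sum_zs : \sum_(x : F) z x * s (x - y) = s y.
  rewrite (bigD1 0) //= /grzero eqxx mul1r sub0r big1 ?addr0.
    by rewrite /grset (D0_opp w_prim four_dvd_N _ eight_dvd_N).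
  by move=> x /negbTE ->; rewrite mul0r.
have sum_zz : \sum_(x : F) z x * z (x - y) = z y.
  rewrite (bigD1 0) //= /grzero eqxx mul1r sub0r oppr_eq0 big1 ?addr0 //.
  by move=> x /negbTE ->; rewrite mul0r.
rewrite !big_split /= -!mulr_sumr sumr_const (sum_shift s) (sum_shift z).
rewrite (sum_D0 w_prim four_dvd_N) sum_grzero sum_sz sum_zs sum_zz.
by rewrite -mulr_natr natz; ring.
Qed.

Lemma card_F_N : #|F| = (4 * (N %/ 4)).+1%N.
Proof. by rewrite mulnC divnK ?four_dvd_N // prednK // card_F; lia. Qed.

Lemma layer0 (y : F) :
  gradd (grmul (grset (B0 w)) (grinv (grset (B0 w))))
        (grmul (grset (B1 w)) (grinv (grset (B1 w)))) (0, y)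
  = ((q ^ 2)%:Z - 2) * grset [set~ 0] y + (2 * (q ^ 2)%:Z - 1) * z y.
Proof.
rewrite /gradd !grmul_grinv_at subrr subr0 -!big_split /=.
rewrite (eq_bigr (fun x => 3 + (-3) * s x + (-3) * s (x - y) + (-2) * z x
     + (-2) * z (x - y) + 4 * (s x * s (x - y)) + 2 * (s x * z (x - y))
     + 2 * (z x * s (x - y)) + 2 * (z x * z (x - y)))); last first.
  by move=> x _; rewrite !grset_B0_0 !grset_B0_1 !grset_B1; ring.
rewrite correlation_expansion -card_F /grset in_setC1 /grzero.
have := card_F_N; have [-> | y0] := eqVneq y 0.
  rewrite (eq_bigr (fun x => s x)) ?(sum_D0 w_prim four_dvd_N); last first.
    by move=> x _; rewrite subr0 /grset; case: (_ \in _).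
  by rewrite /grset (mem_D0 w_prim four_dvd_N) eqxx /=; set n := #|F|; lia.
by rewrite (autocorr_D0 y0) /grset /=; set n := #|F|; lia.
Qed.

Lemma layer1 (y : F) :
  gradd (grmul (grset (B0 w)) (grinv (grset (B0 w))))
        (grmul (grset (B1 w)) (grinv (grset (B1 w)))) (1, y)
  = 2 * s y + (-2) * grset (Dcl w 2) y + ((q ^ 2)%:Z - 1) * grset [set: F] y.
Proof.
rewrite /gradd !grmul_grinv_at subrr (_ : 0 - 1 = 1 :> 'Z_2); last exact: val_inj.
rewrite -!big_split /=.
rewrite (eq_bigr (fun x => 2 + (-1) * s x + (-1) * s (x - y) + (-2) * z x
     + (-2) * z (x - y) + 0 * (s x * s (x - y)) + 2 * (s x * z (x - y))
     + 2 * (z x * s (x - y)) + 2 * (z x * z (x - y)))); last first.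
  by move=> x _; rewrite !grset_B0_0 !grset_B0_1 !grset_B1; ring.
rewrite correlation_expansion (grset_D2 w_prim four_dvd_N) -card_F /grset in_setT /grzero.
by have := card_F_N; set n := #|F|; lia.
Qed.

Lemma card_B0 : #|B0 w| = (q ^ 2)%N.
Proof.
suff : (#|B0 w| : int) = #|F| by rewrite card_F; case.
rewrite card_sum_indicator sum_G2.
under eq_bigr do rewrite -/(grset (B0 w) _) grset_B0_0.
under [X in _ + X]eq_bigr do rewrite -/(grset (B0 w) _) grset_B0_1.
rewrite sumrB sumr_const (sum_D0 w_prim four_dvd_N) -mulr_natr mul1r natz.
by have := card_F_N; set n := #|F|; lia.
Qed.

Lemma card_B1 : #|B1 w| = (q ^ 2 - 1)%N.
Proof.
suff : (#|B1 w| : int) = N by rewrite card_F subn1; case.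
rewrite card_sum_indicator sum_G2.
under eq_bigr do rewrite -/(grset (B1 w) _) grset_B1.
under [X in _ + X]eq_bigr do rewrite -/(grset (B1 w) _) grset_B1.
rewrite !sumrB sumr_const (sum_D0 w_prim four_dvd_N) sum_grzero -mulr_natr mul1r natz.
by have := card_F_N; set n := #|F|; lia.
Qed.

End QuadraticExtension.

Theorem proposition2p2 (q : nat) (F : finFieldType) (w : F)
  (hq : exists p k : nat, [/\ prime p, (0 < k)%N & q = (p ^ k)%N])
  (hq4 : (q %% 4 = 3)%N)
  (hF : #|F| = (q ^ 2)%N)
  (hw : (#|F|.-1).-primitive_root w) :
  #|B0 w| = (q ^ 2)%N /\ #|B1 w| = (q ^ 2 - 1)%N /\
  forall g : G2 F,
    gradd (grmul (grset (B0 w)) (grinv (grset (B0 w))))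
          (grmul (grset (B1 w)) (grinv (grset (B1 w)))) g
    = gradd
        (grembed 0 (gradd (grscale ((q ^ 2)%:Z - 2) (grset [set~ (0 : F)]))
                          (grscale (2 * (q ^ 2)%:Z - 1) (@grzero F))))
        (grembed 1 (gradd (gradd (grscale 2 (grset (Dcl w 0)))
                                 (grscale (-2) (grset (Dcl w 2))))
                          (grscale ((q ^ 2)%:Z - 1) (grset [set: F]))))
        g.
Proof.
have [p [k [p_prime _ q_def]]] := hq.
split; first exact: card_B0 p_prime q_def hq4 hF hw.
split; first exact: card_B1 p_prime q_def hq4 hF hw.
case=> e y.
have [-> | ->] : e = 0 \/ e = 1 by case: e => -[|[|//]] ?; [left | right]; apply: val_inj.
- by rewrite (layer0 p_prime q_def hq4 hF hw) /gradd /grembed /grscale /= addr0.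
- by rewrite (layer1 p_prime q_def hq4 hF hw) /gradd /grembed /grscale /= add0r.
Qed.
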